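(* Let $c,\delta,M$ be positive constants and fix a metric on the disc $D_c=\{z\in\mathbb{C}:|z|<c\}$, with Laplacian $\triangle$. Then there is a constant $\lambda=\lambda(\delta,M,c)$ such that every smooth function $f:D_c\to\mathbb{C}$ satisfying $|f|\le\delta$ and $|d\triangle f|\le M$ on $D_c$ satisfies $|\triangle f|\le\lambda$ on $D_{c/4}=\{|z|<c/4\}$. *)

From Stdlib Require Import Reals.
From Coquelicot Require Import Coquelicot.
Open Scope R_scope.

(* Real-valued functions on the plane R^2 = C (coordinates (x,y), z = x + i y). *)
Definition fn := (R * R)%type -> R.

Definition opendisc (r : R) (p : R * R) : Prop := fst p ^ 2 + snd p ^ 2 < r ^ 2.

Definition dx (f : fn) : fn := fun p => Derive (fun t => f (t, snd p)) (fst p).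
Definition dy (f : fn) : fn := fun p => Derive (fun t => f (fst p, t)) (snd p).

Fixpoint Ck (k : nat) (r : R) (f : fn) : Prop :=
  match k with
  | O => forall p, opendisc r p -> continuous f p
  | S k' =>
      (forall p, opendisc r p -> continuous f p) /\
      (forall p, opendisc r p ->
         ex_derive (fun t => f (t, snd p)) (fst p) /\
         ex_derive (fun t => f (fst p, t)) (snd p)) /\
      Ck k' r (dx f) /\ Ck k' r (dy f)
  end.

Definition smooth_on (r : R) (f : fn) : Prop := forall k, Ck k r f.

Definition smoothC_on (r : R) (f : (R * R)%type -> C) : Prop :=
  smooth_on r (fun p => Re (f p)) /\ smooth_on r (fun p => Im (f p)).

(* A smooth Riemannian metric g = g11 dx^2 + 2 g12 dx dy + g22 dy^2 on D_c. *)
Record metric (c : R) := {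
  g11 : fn; g12 : fn; g22 : fn;
  g11_smooth : smooth_on c g11;
  g12_smooth : smooth_on c g12;
  g22_smooth : smooth_on c g22;
  g_posdef : forall p, opendisc c p -> 0 < g11 p /\ 0 < g11 p * g22 p - g12 p ^ 2 }.

Arguments g11 {c}. Arguments g12 {c}. Arguments g22 {c}.

Definition gdet {c} (g : metric c) : fn := fun p => g11 g p * g22 g p - g12 g p ^ 2.

(* Laplace-Beltrami operator:
   Δ f = (1/sqrt det g) ∂_i ( sqrt(det g) g^{ij} ∂_j f ),
   with g^{11} = g22/det, g^{12} = -g12/det, g^{22} = g11/det. *)
Definition lap {c} (g : metric c) (f : fn) : fn := fun p =>
  / sqrt (gdet g p) *
  ( dx (fun q => sqrt (gdet g q) / gdet g q *
                 (g22 g q * dx f q - g12 g q * dy f q)) p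
  + dy (fun q => sqrt (gdet g q) / gdet g q *
                 (- g12 g q * dx f q + g11 g q * dy f q)) p ).

Definition lapC {c} (g : metric c) (f : (R * R)%type -> C) : (R * R)%type -> C :=
  fun p => (lap g (fun q => Re (f q)) p, lap g (fun q => Im (f q)) p).

(* Squared g-norm of a real covector a dx + b dy: g^{ij} w_i w_j. *)
Definition covnorm2 {c} (g : metric c) (p : R * R) (a b : R) : R :=
  (g22 g p * a ^ 2 - 2 * g12 g p * a * b + g11 g p * b ^ 2) / gdet g p.

(* g-norm of the complex 1-form d h = d(Re h) + i d(Im h). *)
Definition dnormC {c} (g : metric c) (h : (R * R)%type -> C) (p : R * R) : R :=
  let u := fun q => Re (h q) in
  let v := fun q => Im (h q) in
  sqrt (covnorm2 g p (dx u p) (dy u p) + covnorm2 g p (dx v p) (dy v p)).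

(* Treat the real and imaginary parts separately, so let u be real with |u| <= delta, and let
   |p| < c/4.  The closed square Q of half-side r = c/4 about p lies in [-c/2, c/2]^2, inside D_c,
   where the metric coefficients are bounded; there the bound on |d (Delta u)|_g bounds the
   Euclidean gradient of Delta u, so Delta u varies by at most a constant on Q.
   Compare u with w = u - k |q - p|^2, where k r^2 > 2 delta: on the boundary of Q we have
   w < -delta <= w(p), so w attains its maximum over Q at an interior point.  There the gradient of
   w vanishes and its Hessian is negative semidefinite, so Delta w, the trace of g^-1 times the
   Hessian, is <= 0.  Hence Delta u <= k Delta |q - p|^2 somewhere in Q.  As Delta |q - p|^2 is
   bounded uniformly in p, this and the oscillation bound give an upper bound for Delta u (p);
   the same argument applied to -u gives the lower bound. *)

From Stdlib Require Import Reals Lra Psatz Classical ClassicalEpsilon FunctionalExtensionality.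
From Coquelicot Require Import Coquelicot.
Open Scope R_scope.

(** * Smooth functions on a disc *)

Lemma opendisc_locally r p : opendisc r p -> locally p (opendisc r).
Proof.
  intros Hp.
  assert (Hc : continuous (fun q : R * R => fst q ^ 2 + snd q ^ 2) p).
  { apply (continuous_plus (fun q : R * R => fst q ^ 2) (fun q : R * R => snd q ^ 2));
      apply (continuous_comp _ (fun x => x ^ 2)); try apply continuous_fst; try apply continuous_snd;
      apply (ex_derive_continuous (K := R_AbsRing) (V := R_NormedModule)); auto_derive; exact I. }
  exact (Hc _ (open_lt _ _ Hp)).
Qed.

Lemma locally_slice_x (p : R * R) (P : R * R -> Prop) :
  locally p P -> locally (fst p) (fun t => P (t, snd p)).
Proof.
  intros [e He]. exists e. intros t Ht. apply He. split; [exact Ht | apply ball_center].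
Qed.

Lemma locally_slice_y (p : R * R) (P : R * R -> Prop) :
  locally p P -> locally (snd p) (fun t => P (fst p, t)).
Proof.
  intros [e He]. exists e. intros t Ht. apply He. split; [apply ball_center | exact Ht].
Qed.

Section Smoothness.

Variable r : R.

Lemma locally_eq_on_disc (f h : fn) p :
  (forall q, opendisc r q -> f q = h q) -> opendisc r p -> locally p (fun q => f q = h q).
Proof. intros E Hp. exact (filter_imp _ _ E (opendisc_locally r p Hp)). Qed.

Lemma dx_ext_disc f h p : (forall q, opendisc r q -> f q = h q) -> opendisc r p -> dx f p = dx h p.
Proof.
  intros E Hp. apply Derive_ext_loc, (locally_slice_x p (fun q => f q = h q)).
  exact (locally_eq_on_disc f h p E Hp).
Qed.

Lemma dy_ext_disc f h p : (forall q, opendisc r q -> f q = h q) -> opendisc r p -> dy f p = dy h p.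
Proof.
  intros E Hp. apply Derive_ext_loc, (locally_slice_y p (fun q => f q = h q)).
  exact (locally_eq_on_disc f h p E Hp).
Qed.

Lemma Ck_continuous k f p : Ck k r f -> opendisc r p -> continuous f p.
Proof. destruct k; simpl; [auto | intros H; apply H]. Qed.

Lemma Ck_pred k f : Ck (S k) r f -> Ck k r f.
Proof.
  revert f; induction k as [|k IH]; intros f Hf; [exact (proj1 Hf)|].
  destruct Hf as (Hc & Hd & Hx & Hy). exact (conj Hc (conj Hd (conj (IH _ Hx) (IH _ Hy)))).
Qed.

Lemma Ck_ext k f h : (forall p, opendisc r p -> f p = h p) -> Ck k r f -> Ck k r h.
Proof.
  assert (Cont : forall f h : fn, (forall p, opendisc r p -> f p = h p) ->
      (forall p, opendisc r p -> continuous f p) -> forall p, opendisc r p -> continuous h p).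
  { intros f' h' E Hc p Hp.
    apply (continuous_ext_loc _ _ _ (locally_eq_on_disc f' h' p E Hp)); auto. }
  revert f h; induction k as [|k IH]; intros f h E Hf; [exact (Cont f h E Hf)|].
  destruct Hf as (Hc & Hd & Hx & Hy). split; [exact (Cont f h E Hc)|]. split.
  - intros p Hp. destruct (Hd p Hp) as [Dx Dy]. pose proof (locally_eq_on_disc f h p E Hp) as L.
    split.
    + exact (ex_derive_ext_loc _ _ _ (locally_slice_x p (fun q => f q = h q) L) Dx).
    + exact (ex_derive_ext_loc _ _ _ (locally_slice_y p (fun q => f q = h q) L) Dy).
  - split; [apply (IH (dx f)) | apply (IH (dy f))]; auto;
      intros p Hp; [apply dx_ext_disc | apply dy_ext_disc]; auto.
Qed.

Lemma Ck_const k a : Ck k r (fun _ => a).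
Proof.
  revert a; induction k as [|k IH]; intros a.
  - intros p _. apply continuous_const.
  - split; [intros p _; apply continuous_const|].
    split; [intros p _; split; apply ex_derive_const|].
    split; apply (Ck_ext k (fun _ => 0)); auto; intros p _;
      [unfold dx | unfold dy]; rewrite Derive_const; reflexivity.
Qed.

Lemma Ck_plus k f h : Ck k r f -> Ck k r h -> Ck k r (fun q => f q + h q).
Proof.
  revert f h; induction k as [|k IH]; intros f h Hf Hh.
  - intros p Hp. exact (continuous_plus f h p (Hf p Hp) (Hh p Hp)).
  - destruct Hf as (Fc & Fd & Fx & Fy), Hh as (Hc & Hd & Hx & Hy).
    split; [intros p Hp; exact (continuous_plus f h p (Fc p Hp) (Hc p Hp))|].
    split; [intros p Hp; destruct (Fd p Hp) as [Fdx Fdy], (Hd p Hp) as [Hdx Hdy];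
      split; [exact (ex_derive_plus _ _ _ Fdx Hdx) | exact (ex_derive_plus _ _ _ Fdy Hdy)]|].
    split.
    + apply (Ck_ext k (fun q => dx f q + dx h q)); [|exact (IH _ _ Fx Hx)].
      intros p Hp. unfold dx. rewrite Derive_plus; [reflexivity | apply Fd | apply Hd]; auto.
    + apply (Ck_ext k (fun q => dy f q + dy h q)); [|exact (IH _ _ Fy Hy)].
      intros p Hp. unfold dy. rewrite Derive_plus; [reflexivity | apply Fd | apply Hd]; auto.
Qed.

Lemma Ck_mult k f h : Ck k r f -> Ck k r h -> Ck k r (fun q => f q * h q).
Proof.
  revert f h; induction k as [|k IH]; intros f h Hf Hh.
  - intros p Hp. exact (continuous_mult f h p (Hf p Hp) (Hh p Hp)).
  - pose proof (Ck_pred k f Hf) as Hf'. pose proof (Ck_pred k h Hh) as Hh'.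
    destruct Hf as (Fc & Fd & Fx & Fy), Hh as (Hc & Hd & Hx & Hy).
    split; [intros p Hp; exact (continuous_mult f h p (Fc p Hp) (Hc p Hp))|].
    split; [intros p Hp; destruct (Fd p Hp) as [Fdx Fdy], (Hd p Hp) as [Hdx Hdy];
      split; [exact (ex_derive_mult _ _ _ Fdx Hdx) | exact (ex_derive_mult _ _ _ Fdy Hdy)]|].
    split.
    + apply (Ck_ext k (fun q => dx f q * h q + f q * dx h q)); [|apply Ck_plus; auto].
      intros [x y] Hp. unfold dx. rewrite Derive_mult; [reflexivity | apply Fd | apply Hd]; auto.
    + apply (Ck_ext k (fun q => dy f q * h q + f q * dy h q)); [|apply Ck_plus; auto].
      intros [x y] Hp. unfold dy. rewrite Derive_mult; [reflexivity | apply Fd | apply Hd]; auto.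
Qed.

Lemma Ck_fst k : Ck k r fst.
Proof.
  destruct k as [|k]; [intros p _; apply continuous_fst|].
  split; [intros p _; apply continuous_fst|].
  split; [intros p _; simpl; split; [apply ex_derive_id | apply ex_derive_const]|].
  split; [apply (Ck_ext k (fun _ => 1)) | apply (Ck_ext k (fun _ => 0))]; try apply Ck_const;
    intros p _; unfold dx, dy; simpl; [rewrite Derive_id | rewrite Derive_const]; reflexivity.
Qed.

Lemma Ck_snd k : Ck k r snd.
Proof.
  destruct k as [|k]; [intros p _; apply continuous_snd|].
  split; [intros p _; apply continuous_snd|].
  split; [intros p _; simpl; split; [apply ex_derive_const | apply ex_derive_id]|].
  split; [apply (Ck_ext k (fun _ => 0)) | apply (Ck_ext k (fun _ => 1))]; try apply Ck_const;
    intros p _; unfold dx, dy; simpl; [rewrite Derive_const | rewrite Derive_id]; reflexivity.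
Qed.

Section Composition.

Variables (phi dphi : R -> R) (f : fn).
Hypothesis phi_derive : forall p, opendisc r p -> is_derive phi (f p) (dphi (f p)).

Lemma Ck_comp_0 : Ck 0 r f -> Ck 0 r (fun q => phi (f q)).
Proof.
  intros Hc p Hp. apply (continuous_comp f phi); [exact (Hc p Hp)|].
  apply (ex_derive_continuous (K := R_AbsRing) (V := R_NormedModule)).
  exists (dphi (f p)). exact (phi_derive p Hp).
Qed.

Lemma Ck_comp_S k : Ck (S k) r f -> Ck k r (fun q => dphi (f q)) ->
  Ck (S k) r (fun q => phi (f q)).
Proof.
  intros Hf Hd'. pose proof (Ck_pred k f Hf) as Hf'. destruct Hf as (Fc & Fd & Fx & Fy).
  assert (Dx : forall p, opendisc r p ->
      is_derive (fun t => phi (f (t, snd p))) (fst p) (dx f p * dphi (f p))).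
  { intros [x y] Hp. apply (is_derive_comp phi (fun t => f (t, y))).
    - exact (phi_derive _ Hp).
    - exact (Derive_correct _ _ (proj1 (Fd _ Hp))). }
  assert (Dy : forall p, opendisc r p ->
      is_derive (fun t => phi (f (fst p, t))) (snd p) (dy f p * dphi (f p))).
  { intros [x y] Hp. apply (is_derive_comp phi (fun t => f (x, t))).
    - exact (phi_derive _ Hp).
    - exact (Derive_correct _ _ (proj2 (Fd _ Hp))). }
  split; [exact (Ck_comp_0 Fc)|].
  split; [intros p Hp; split; eexists; [apply Dx | apply Dy]; exact Hp|].
  split.
  - apply (Ck_ext k (fun q => dx f q * dphi (f q))); [|apply Ck_mult; auto].
    intros p Hp. symmetry. exact (is_derive_unique _ _ _ (Dx p Hp)).
  - apply (Ck_ext k (fun q => dy f q * dphi (f q))); [|apply Ck_mult; auto].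
    intros p Hp. symmetry. exact (is_derive_unique _ _ _ (Dy p Hp)).
Qed.

End Composition.

Lemma Ck_inv k f : (forall p, opendisc r p -> f p <> 0) -> Ck k r f -> Ck k r (fun q => / f q).
Proof.
  intros Hn. revert f Hn; induction k as [|k IH]; intros f Hn Hf;
    assert (D : forall p, opendisc r p -> is_derive Rinv (f p) (- / f p ^ 2))
      by (intros p Hp; auto_derive; [exact (Hn p Hp) | field; exact (Hn p Hp)]).
  - exact (Ck_comp_0 Rinv (fun x => - / x ^ 2) f D Hf).
  - apply (Ck_comp_S Rinv (fun x => - / x ^ 2) f D); auto.
    apply (Ck_ext k (fun q => -1 * (/ f q * / f q))).
    + intros p Hp. field. exact (Hn p Hp).
    + pose proof (IH f Hn (Ck_pred k f Hf)). apply Ck_mult; [apply Ck_const | apply Ck_mult]; auto.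
Qed.

Lemma Ck_sqrt k f : (forall p, opendisc r p -> 0 < f p) -> Ck k r f -> Ck k r (fun q => sqrt (f q)).
Proof.
  intros Hpos. revert f Hpos; induction k as [|k IH]; intros f Hpos Hf;
    assert (D : forall p, opendisc r p -> is_derive sqrt (f p) (/ (2 * sqrt (f p))))
      by (intros p Hp; pose proof (sqrt_lt_R0 _ (Hpos p Hp));
          auto_derive; [exact (Hpos p Hp) | field; lra]).
  - exact (Ck_comp_0 sqrt (fun x => / (2 * sqrt x)) f D Hf).
  - apply (Ck_comp_S sqrt (fun x => / (2 * sqrt x)) f D); auto.
    apply Ck_inv.
    + intros p Hp. pose proof (sqrt_lt_R0 _ (Hpos p Hp)). lra.
    + apply Ck_mult; [apply Ck_const | exact (IH f Hpos (Ck_pred k f Hf))].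
Qed.

End Smoothness.

Section SmoothFunctions.

Variable r : R.

Lemma smooth_continuous f p : smooth_on r f -> opendisc r p -> continuous f p.
Proof. intros H. exact (Ck_continuous r 0 f p (H 0%nat)). Qed.

Lemma smooth_dx f : smooth_on r f -> smooth_on r (dx f).
Proof. intros H k. exact (proj1 (proj2 (proj2 (H (S k))))). Qed.

Lemma smooth_dy f : smooth_on r f -> smooth_on r (dy f).
Proof. intros H k. exact (proj2 (proj2 (proj2 (H (S k))))). Qed.

Lemma smooth_is_derive_x f x y : smooth_on r f -> opendisc r (x, y) ->
  is_derive (fun t => f (t, y)) x (dx f (x, y)).
Proof. intros H Hp. exact (Derive_correct _ _ (proj1 (proj1 (proj2 (H 1%nat)) _ Hp))). Qed.

Lemma smooth_is_derive_y f x y : smooth_on r f -> opendisc r (x, y) ->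
  is_derive (fun t => f (x, t)) y (dy f (x, y)).
Proof. intros H Hp. exact (Derive_correct _ _ (proj2 (proj1 (proj2 (H 1%nat)) _ Hp))). Qed.

Lemma smooth_ext f h : (forall p, opendisc r p -> f p = h p) -> smooth_on r f -> smooth_on r h.
Proof. intros E H k. exact (Ck_ext r k f h E (H k)). Qed.

Lemma smooth_const a : smooth_on r (fun _ => a).
Proof. intros k. apply Ck_const. Qed.

Lemma smooth_fst : smooth_on r fst.
Proof. intros k. apply Ck_fst. Qed.

Lemma smooth_snd : smooth_on r snd.
Proof. intros k. apply Ck_snd. Qed.

Lemma smooth_plus f h : smooth_on r f -> smooth_on r h -> smooth_on r (fun q => f q + h q).
Proof. intros A B k. apply Ck_plus; auto. Qed.

Lemma smooth_mult f h : smooth_on r f -> smooth_on r h -> smooth_on r (fun q => f q * h q).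
Proof. intros A B k. apply Ck_mult; auto. Qed.

Lemma smooth_lin f h a : smooth_on r f -> smooth_on r h -> smooth_on r (fun q => f q + a * h q).
Proof. intros A B. apply smooth_plus, smooth_mult; auto using smooth_const. Qed.

Lemma smooth_opp f : smooth_on r f -> smooth_on r (fun q => - f q).
Proof.
  intros A. apply (smooth_ext (fun q => -1 * f q)); [intros; ring|].
  apply smooth_mult; auto using smooth_const.
Qed.

Lemma smooth_minus f h : smooth_on r f -> smooth_on r h -> smooth_on r (fun q => f q - h q).
Proof. intros A B. exact (smooth_plus f _ A (smooth_opp h B)). Qed.

Lemma smooth_inv f : (forall p, opendisc r p -> f p <> 0) -> smooth_on r f ->
  smooth_on r (fun q => / f q).
Proof. intros A B k. apply Ck_inv; auto. Qed.

Lemma smooth_sqrt f : (forall p, opendisc r p -> 0 < f p) -> smooth_on r f ->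
  smooth_on r (fun q => sqrt (f q)).
Proof. intros A B k. apply Ck_sqrt; auto. Qed.

Lemma dx_lin f h a p : smooth_on r f -> smooth_on r h -> opendisc r p ->
  dx (fun q => f q + a * h q) p = dx f p + a * dx h p.
Proof.
  intros A B Hp. destruct p as [x y].
  apply is_derive_unique, (is_derive_plus (fun t => f (t, y))), is_derive_scal;
    apply smooth_is_derive_x; auto.
Qed.

Lemma dy_lin f h a p : smooth_on r f -> smooth_on r h -> opendisc r p ->
  dy (fun q => f q + a * h q) p = dy f p + a * dy h p.
Proof.
  intros A B Hp. destruct p as [x y].
  apply is_derive_unique, (is_derive_plus (fun t => f (x, t))), is_derive_scal;
    apply smooth_is_derive_y; auto.
Qed.

End SmoothFunctions.

(** * Second-order behaviour at a local maximum *)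

Lemma continuity_2d_pt_of_continuous (f : fn) x y :
  continuous f (x, y) -> continuity_2d_pt (fun u v => f (u, v)) x y.
Proof.
  intros Hc. apply continuity_2d_pt_filterlim.
  apply (filterlim_ext f); [intros [u v]; reflexivity | exact Hc].
Qed.

Lemma opendisc_locally_2d r x y : opendisc r (x, y) -> locally_2d (fun u v => opendisc r (u, v)) x y.
Proof.
  intros Hp. apply locally_2d_locally.
  apply (filter_imp (opendisc r)); [intros [u v] H; exact H | exact (opendisc_locally r _ Hp)].
Qed.

Lemma Ck_ex_diff_n k r f x y : Ck k r f -> opendisc r (x, y) ->
  ex_diff_n (fun u v => f (u, v)) k x y.
Proof.
  intros Hf Hp. revert f Hf; induction k as [|k IH]; intros f Hf.
  - exact (conj (continuity_2d_pt_of_continuous f x y (Hf _ Hp)) I).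
  - destruct Hf as (Fc & Fd & Fx & Fy).
    split; [exact (continuity_2d_pt_of_continuous f x y (Fc _ Hp))|].
    exact (conj (proj1 (Fd _ Hp)) (conj (proj2 (Fd _ Hp)) (conj (IH (dx f) Fx) (IH (dy f) Fy)))).
Qed.

Lemma smooth_taylor2 r w x y : smooth_on r w -> opendisc r (x, y) ->
  exists D, locally_2d (fun u v =>
    Rabs (w (u, v) - (w (x, y) + (dx w (x, y) * (u - x) + dy w (x, y) * (v - y))
      + (dx (dx w) (x, y) * (u - x) ^ 2 + 2 * dx (dy w) (x, y) * (u - x) * (v - y)
         + dy (dy w) (x, y) * (v - y) ^ 2) / 2))
    <= D * Rmax (Rabs (u - x)) (Rabs (v - y)) ^ 3) x y.
Proof.
  intros Hw Hp.
  assert (Reg : locally_2d (fun u v => ex_diff_n (fun u v => w (u, v)) 3 u v) x y).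
  { apply (locally_2d_impl (fun u v => opendisc r (u, v))); [|exact (opendisc_locally_2d r x y Hp)].
    apply locally_2d_forall. intros u v Hq. exact (Ck_ex_diff_n 3 r w u v (Hw 3%nat) Hq). }
  destruct (Taylor_Lagrange_2d _ 2 x y Reg) as [D [d Hd]].
  exists D, d. intros u v Hu Hv.
  replace (w (x, y) + _ + _) with (DL_pol 2 (fun u v => w (u, v)) x y (u - x) (v - y));
    [exact (Hd u v Hu Hv)|].
  unfold DL_pol, differential, Binomial.C, partial_derive, dx, dy. simpl. field.
Qed.

Lemma smooth_dy_dx r w x y : smooth_on r w -> opendisc r (x, y) -> dy (dx w) (x, y) = dx (dy w) (x, y).
Proof.
  intros Hw Hp. symmetry. apply (Schwarz (fun u v => w (u, v)) x y).
  - destruct (opendisc_locally_2d r x y Hp) as [d Hd]. exists d. intros u v Hu Hv.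
    pose proof (Hd u v Hu Hv) as Huv.
    repeat split; eexists.
    + exact (smooth_is_derive_x r w u v Hw Huv).
    + exact (smooth_is_derive_y r w u v Hw Huv).
    + exact (smooth_is_derive_x r (dy w) u v (smooth_dy r w Hw) Huv).
    + exact (smooth_is_derive_y r (dx w) u v (smooth_dx r w Hw) Huv).
  - exact (continuity_2d_pt_of_continuous (dx (dy w)) x y
             (smooth_continuous r _ _ (smooth_dx r _ (smooth_dy r w Hw)) Hp)).
  - exact (continuity_2d_pt_of_continuous (dy (dx w)) x y
             (smooth_continuous r _ _ (smooth_dy r _ (smooth_dx r w Hw)) Hp)).
Qed.

Lemma nonpos_of_le_linear a K e : 0 < e -> (forall t, 0 < t < e -> a <= K * t) -> a <= 0.
Proof.
  intros He H. apply Rnot_lt_le. intros Ha.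
  pose proof (Rabs_pos K) as HK. pose proof (Rle_abs K) as HK'.
  pose proof (Rmin_l (e / 2) (a / (2 * (Rabs K + 1)))) as Hte.
  pose proof (Rmin_r (e / 2) (a / (2 * (Rabs K + 1)))) as HtK.
  set (t := Rmin (e / 2) (a / (2 * (Rabs K + 1)))) in *.
  assert (Ht : 0 < t) by (apply Rmin_pos; [lra | apply Rdiv_lt_0_compat; lra]).
  apply (Rmult_le_compat_r (2 * (Rabs K + 1))) in HtK; [|lra].
  unfold Rdiv in HtK. rewrite Rmult_assoc, Rinv_l, Rmult_1_r in HtK by lra.
  assert (Hte' : t < e) by lra. pose proof (H t (conj Ht Hte')). nra.
Qed.

Lemma Derive_zero_at_local_max (h : R -> R) x :
  ex_derive h x -> locally x (fun t => h t <= h x) -> Derive h x = 0.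
Proof.
  intros Hd [e He]. pose proof (cond_pos e) as He0.
  pose proof (ex_derive_Reals_0 _ _ Hd) as pr. rewrite <- (Derive_Reals h x pr).
  apply (deriv_maximum h (x - e) (x + e) x pr); try lra.
  intros t H1 H2. apply He. change (Rabs (t - x) < e). apply Rabs_def1; lra.
Qed.

Section LocalMaximum.

Variables (r : R) (w : fn) (p : R * R).
Hypotheses (w_smooth : smooth_on r w) (p_in : opendisc r p)
  (p_max : locally p (fun q => w q <= w p)).

Lemma grad_zero_at_local_max : dx w p = 0 /\ dy w p = 0.
Proof.
  destruct p as [x y]. split; apply Derive_zero_at_local_max.
  - eexists. exact (smooth_is_derive_x r w x y w_smooth p_in).
  - exact (locally_slice_x (x, y) _ p_max).
  - eexists. exact (smooth_is_derive_y r w x y w_smooth p_in).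
  - exact (locally_slice_y (x, y) _ p_max).
Qed.

Lemma hessian_nonpos_at_local_max v1 v2 :
  v1 ^ 2 * dx (dx w) p + 2 * v1 * v2 * dx (dy w) p + v2 ^ 2 * dy (dy w) p <= 0.
Proof.
  destruct grad_zero_at_local_max as [Gx Gy].
  destruct p as [x y].
  destruct (smooth_taylor2 r w x y w_smooth p_in) as [D HD].
  assert (Hmax : locally_2d (fun u v => w (u, v) <= w (x, y)) x y).
  { apply locally_2d_locally, (filter_imp (fun q => w q <= w (x, y)));
      [intros [u v] H; exact H | exact p_max]. }
  destruct (locally_2d_and _ _ x y HD Hmax) as [d Hd].
  set (Q := v1 ^ 2 * dx (dx w) (x, y) + 2 * v1 * v2 * dx (dy w) (x, y) + v2 ^ 2 * dy (dy w) (x, y)).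
  set (m := Rmax (Rabs v1) (Rabs v2)).
  assert (Hm : 0 <= m) by exact (Rle_trans _ _ _ (Rabs_pos v1) (Rmax_l _ _)).
  (* Along [t |-> p + t v], Taylor's formula and maximality give [t^2 Q / 2 <= D (t m)^3]. *)
  apply (nonpos_of_le_linear Q (2 * D * m ^ 3) (d / (m + 1)));
    [apply Rdiv_lt_0_compat; [apply cond_pos | lra]|].
  intros t [Ht Htd]. apply Rlt_div_r in Htd; [|lra].
  assert (Hv1 : Rabs (t * v1) = t * Rabs v1) by (rewrite Rabs_mult, Rabs_pos_eq; lra).
  assert (Hv2 : Rabs (t * v2) = t * Rabs v2) by (rewrite Rabs_mult, Rabs_pos_eq; lra).
  assert (M1 : Rabs v1 <= m) by apply Rmax_l. assert (M2 : Rabs v2 <= m) by apply Rmax_r.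
  assert (In1 : Rabs (x + t * v1 - x) < d)
    by (replace (x + t * v1 - x) with (t * v1) by ring; rewrite Hv1; nra).
  assert (In2 : Rabs (y + t * v2 - y) < d)
    by (replace (y + t * v2 - y) with (t * v2) by ring; rewrite Hv2; nra).
  destruct (Hd _ _ In1 In2) as [Tay Max].
  replace (x + t * v1 - x) with (t * v1) in Tay by ring.
  replace (y + t * v2 - y) with (t * v2) in Tay by ring.
  rewrite Hv1, Hv2, RmaxRmult, Gx, Gy in Tay by lra. fold m in Tay.
  apply Rabs_le_between in Tay.
  assert (Bound : t ^ 2 * Q <= t ^ 2 * (2 * D * m ^ 3 * t)) by (unfold Q; lra).
  apply Rmult_le_reg_l in Bound; [exact Bound | apply pow_lt; lra].
Qed.

End LocalMaximum.

(** * The Laplace-Beltrami operator *)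

Lemma is_derive_weighted_sum_at_roots (a b d U V : R -> R) x da db dd dU dV :
  is_derive a x da -> is_derive b x db -> is_derive d x dd -> is_derive U x dU -> is_derive V x dV ->
  U x = 0 -> V x = 0 ->
  is_derive (fun t => a t * (b t * U t + d t * V t)) x (a x * (b x * dU + d x * dV)).
Proof.
  intros Da Db Dd DU DV HU HV.
  pose proof (is_derive_mult _ _ x _ _ Da (is_derive_plus _ _ x _ _
    (is_derive_mult _ _ x _ _ Db DU Rmult_comm) (is_derive_mult _ _ x _ _ Dd DV Rmult_comm))
    Rmult_comm) as D.
  simpl in D. rewrite HU, HV in D. unfold plus, mult in D; simpl in D.
  replace (a x * _)
    with (da * (b x * 0 + d x * 0) + a x * (db * 0 + b x * dU + (dd * 0 + d x * dV))) by ring.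
  exact D.
Qed.

Section Laplacian.

Variables (c : R) (g : metric c).

Lemma gdet_pos p : opendisc c p -> 0 < gdet g p.
Proof. intros Hp. exact (proj2 (g_posdef c g p Hp)). Qed.

Lemma smooth_gdet : smooth_on c (gdet g).
Proof.
  apply smooth_minus; [apply smooth_mult; [apply g11_smooth | apply g22_smooth]|].
  apply (smooth_ext c (fun q => g12 g q * g12 g q)); [intros; simpl; ring|].
  apply smooth_mult; apply g12_smooth.
Qed.

Lemma smooth_lap_weight : smooth_on c (fun q => sqrt (gdet g q) / gdet g q).
Proof.
  apply smooth_mult; [apply smooth_sqrt; [exact gdet_pos | exact smooth_gdet]|].
  apply smooth_inv; [intros p Hp; pose proof (gdet_pos p Hp); lra | exact smooth_gdet].
Qed.

Definition flux_x (F : fn) : fn := fun q =>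
  sqrt (gdet g q) / gdet g q * (g22 g q * dx F q - g12 g q * dy F q).
Definition flux_y (F : fn) : fn := fun q =>
  sqrt (gdet g q) / gdet g q * (- g12 g q * dx F q + g11 g q * dy F q).

Lemma lap_div_flux F p : lap g F p = / sqrt (gdet g p) * (dx (flux_x F) p + dy (flux_y F) p).
Proof. reflexivity. Qed.

Lemma smooth_flux_x F : smooth_on c F -> smooth_on c (flux_x F).
Proof.
  intros HF. apply smooth_mult; [exact smooth_lap_weight|].
  apply smooth_minus; apply smooth_mult;
    auto using g12_smooth, g22_smooth, smooth_dx, smooth_dy.
Qed.

Lemma smooth_flux_y F : smooth_on c F -> smooth_on c (flux_y F).
Proof.
  intros HF. apply smooth_mult; [exact smooth_lap_weight|].
  apply smooth_plus; apply smooth_mult;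
    auto using g11_smooth, g12_smooth, smooth_opp, smooth_dx, smooth_dy.
Qed.

Lemma smooth_lap F : smooth_on c F -> smooth_on c (lap g F).
Proof.
  intros HF. apply smooth_mult.
  - apply smooth_inv; [intros p Hp; pose proof (sqrt_lt_R0 _ (gdet_pos p Hp)); lra|].
    apply smooth_sqrt; [exact gdet_pos | exact smooth_gdet].
  - apply smooth_plus; [apply smooth_dx, smooth_flux_x | apply smooth_dy, smooth_flux_y]; exact HF.
Qed.

Lemma lap_lin F H a p : smooth_on c F -> smooth_on c H -> opendisc c p ->
  lap g (fun q => F q + a * H q) p = lap g F p + a * lap g H p.
Proof.
  intros HF HH Hp. rewrite !lap_div_flux.
  rewrite (dx_ext_disc c _ (fun q => flux_x F q + a * flux_x H q)),
          (dy_ext_disc c _ (fun q => flux_y F q + a * flux_y H q)); auto.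
  - rewrite (dx_lin c), (dy_lin c); auto using smooth_flux_x, smooth_flux_y. ring.
  - intros q Hq. unfold flux_y. rewrite (dx_lin c), (dy_lin c); auto. ring.
  - intros q Hq. unfold flux_x. rewrite (dx_lin c), (dy_lin c); auto. ring.
Qed.

Lemma lap_const a p : lap g (fun _ => a) p = 0.
Proof.
  assert (Flux : forall q, flux_x (fun _ => a) q = 0 /\ flux_y (fun _ => a) q = 0).
  { intros q. unfold flux_x, flux_y, dx, dy. cbv beta. rewrite !Derive_const. split; ring. }
  rewrite lap_div_flux. unfold dx at 1, dy at 1.
  rewrite (Derive_ext _ (fun _ => 0)), (Derive_ext (fun t => flux_y _ (fst p, t)) (fun _ => 0));
    [| intros; apply Flux | intros; apply Flux].
  rewrite !Derive_const. ring.
Qed.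

Lemma lap_opp F p : smooth_on c F -> opendisc c p -> lap g (fun q => - F q) p = - lap g F p.
Proof.
  intros HF Hp.
  replace (fun q => - F q) with (fun q => (fun _ => 0) q + -1 * F q)
    by (apply functional_extensionality; intros; ring).
  rewrite lap_lin, lap_const; [ring | apply smooth_const | exact HF | exact Hp].
Qed.

Lemma lap_at_critical_point w x y : smooth_on c w -> opendisc c (x, y) ->
  dx w (x, y) = 0 -> dy w (x, y) = 0 ->
  lap g w (x, y) = / gdet g (x, y) * (g22 g (x, y) * dx (dx w) (x, y)
    - g12 g (x, y) * (dx (dy w) (x, y) + dy (dx w) (x, y)) + g11 g (x, y) * dy (dy w) (x, y)).
Proof.
  intros Hw Hp Gx Gy.
  set (a := fun q => sqrt (gdet g q) / gdet g q).
  pose proof smooth_lap_weight as Ha. fold a in Ha.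
  pose proof (smooth_dx c w Hw) as Hwx. pose proof (smooth_dy c w Hw) as Hwy.
  pose proof (g11_smooth c g) as H11. pose proof (g22_smooth c g) as H22.
  pose proof (smooth_opp c _ (g12_smooth c g)) as H12.
  assert (Fx : dx (flux_x w) (x, y)
    = a (x, y) * (g22 g (x, y) * dx (dx w) (x, y) + - g12 g (x, y) * dx (dy w) (x, y))).
  { unfold dx at 1. simpl.
    rewrite (Derive_ext _
      (fun t => a (t, y) * (g22 g (t, y) * dx w (t, y) + - g12 g (t, y) * dy w (t, y))))
      by (intros; unfold flux_x, a; ring).
    apply is_derive_unique;
      eapply (is_derive_weighted_sum_at_roots (fun t => a (t, y)) (fun t => g22 g (t, y))
      (fun t => - g12 g (t, y)) (fun t => dx w (t, y)) (fun t => dy w (t, y)));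
      [exact (smooth_is_derive_x c _ x y Ha Hp) | exact (smooth_is_derive_x c _ x y H22 Hp)
      | exact (smooth_is_derive_x c _ x y H12 Hp) | exact (smooth_is_derive_x c _ x y Hwx Hp)
      | exact (smooth_is_derive_x c _ x y Hwy Hp) | exact Gx | exact Gy]. }
  assert (Fy : dy (flux_y w) (x, y)
    = a (x, y) * (- g12 g (x, y) * dy (dx w) (x, y) + g11 g (x, y) * dy (dy w) (x, y))).
  { apply is_derive_unique;
      eapply (is_derive_weighted_sum_at_roots (fun t => a (x, t)) (fun t => - g12 g (x, t))
      (fun t => g11 g (x, t)) (fun t => dx w (x, t)) (fun t => dy w (x, t)));
      [exact (smooth_is_derive_y c _ x y Ha Hp) | exact (smooth_is_derive_y c _ x y H12 Hp)
      | exact (smooth_is_derive_y c _ x y H11 Hp) | exact (smooth_is_derive_y c _ x y Hwx Hp)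
      | exact (smooth_is_derive_y c _ x y Hwy Hp) | exact Gx | exact Gy]. }
  pose proof (gdet_pos _ Hp) as HD. pose proof (sqrt_lt_R0 _ HD) as HsD.
  rewrite lap_div_flux, Fx, Fy. unfold a. field. split; lra.
Qed.

Lemma lap_nonpos_at_local_max w p : smooth_on c w -> opendisc c p ->
  locally p (fun q => w q <= w p) -> lap g w p <= 0.
Proof.
  intros Hw Hp Hmax.
  destruct (grad_zero_at_local_max c w p Hw Hp Hmax) as [Gx Gy].
  pose proof (hessian_nonpos_at_local_max c w p Hw Hp Hmax (g22 g p) (- g12 g p)) as Q1.
  pose proof (hessian_nonpos_at_local_max c w p Hw Hp Hmax 0 1) as Q2.
  destruct p as [x y]. destruct (g_posdef c g _ Hp) as [P11 PD].
  rewrite lap_at_critical_point, (smooth_dy_dx c w x y Hw Hp); auto.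
  fold (gdet g (x, y)) in PD |- *.
  set (S := g22 g (x, y) * dx (dx w) (x, y) - g12 g (x, y) * (dx (dy w) (x, y) + dx (dy w) (x, y))
            + g11 g (x, y) * dy (dy w) (x, y)).
  assert (Hyy : dy (dy w) (x, y) <= 0) by lra.
  assert (P22 : 0 < g22 g (x, y)) by (unfold gdet in PD; nra).
  assert (HS : g22 g (x, y) * S <= 0).
  { (* [g22 * S] is the Hessian form at [(g22, -g12)] plus [det g] times the form at [(0, 1)]. *)
    replace (g22 g (x, y) * S) with
      (g22 g (x, y) ^ 2 * dx (dx w) (x, y) + 2 * g22 g (x, y) * - g12 g (x, y) * dx (dy w) (x, y)
       + (- g12 g (x, y)) ^ 2 * dy (dy w) (x, y) + gdet g (x, y) * dy (dy w) (x, y))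
      by (unfold S, gdet; ring).
    nra. }
  assert (0 < / gdet g (x, y)) by (apply Rinv_0_lt_compat; exact PD).
  nra.
Qed.

End Laplacian.

(** * Continuous functions on closed squares *)

Definition square (p : R * R) (r : R) (q : R * R) : Prop :=
  fst p - r <= fst q <= fst p + r /\ snd p - r <= snd q <= snd p + r.

Lemma square_convex p r q s : square p r q -> 0 <= s <= 1 ->
  square p r (fst p + s * (fst q - fst p), snd p + s * (snd q - snd p)).
Proof. intros [Hx Hy] Hs. unfold square; simpl. split; split; nra. Qed.

Lemma square_locally p r q : Rabs (fst q - fst p) < r -> Rabs (snd q - snd p) < r ->
  locally q (square p r).
Proof.
  intros Hx Hy.
  assert (He : 0 < Rmin (r - Rabs (fst q - fst p)) (r - Rabs (snd q - snd p))) by (apply Rmin_pos; lra).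
  exists (mkposreal _ He). intros [zx zy] [Bx By]. simpl in Bx, By.
  change (Rabs (zx - fst q) < Rmin (r - Rabs (fst q - fst p)) (r - Rabs (snd q - snd p))) in Bx.
  change (Rabs (zy - snd q) < Rmin (r - Rabs (fst q - fst p)) (r - Rabs (snd q - snd p))) in By.
  pose proof (Rmin_l (r - Rabs (fst q - fst p)) (r - Rabs (snd q - snd p))).
  pose proof (Rmin_r (r - Rabs (fst q - fst p)) (r - Rabs (snd q - snd p))).
  pose proof (Rle_abs (fst q - fst p)). pose proof (Rabs_maj2 (fst q - fst p)).
  pose proof (Rle_abs (snd q - snd p)). pose proof (Rabs_maj2 (snd q - snd p)).
  apply Rabs_lt_between' in Bx, By.
  unfold square; simpl. split; split; lra.
Qed.

Lemma square_half_in_disc c q : 0 < c -> square (0, 0) (c / 2) q -> opendisc c q.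
Proof. intros Hc [Hx Hy]. unfold opendisc. simpl in *. nra. Qed.

Lemma square_quarter_in_half c p q : 0 < c -> opendisc (c / 4) p -> square p (c / 4) q ->
  square (0, 0) (c / 2) q.
Proof.
  intros Hc Hp [Hx Hy]. unfold opendisc in Hp. unfold square in *. simpl in *. split; split; nra.
Qed.

Lemma square_unif_cont (F : fn) p r : (forall q, square p r q -> continuous F q) ->
  forall eps, 0 < eps -> exists d, 0 < d /\ forall q q', square p r q -> square p r q' ->
    Rabs (fst q - fst q') < d -> Rabs (snd q - snd q') < d -> Rabs (F q - F q') < eps.
Proof.
  intros Hc eps He.
  assert (Local : forall u v, exists e : posreal, square p r (u, v) -> forall x y,
      Rabs (x - u) < 2 * e -> Rabs (y - v) < 2 * e -> Rabs (F (x, y) - F (u, v)) < eps / 2).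
  { intros u v. destruct (classic (square p r (u, v))) as [Hin | Hout].
    - destruct (continuity_2d_pt_of_continuous F u v (Hc _ Hin) (mkposreal (eps / 2) ltac:(lra)))
        as [d Hd].
      exists (pos_div_2 d). intros _ x y Hx Hy. apply Hd; simpl in *; lra.
    - exists (mkposreal 1 Rlt_0_1). intros Hin; contradiction. }
  set (delta := fun u v => proj1_sig (constructive_indefinite_description _ (Local u v))).
  assert (Hdelta : forall u v, square p r (u, v) -> forall x y,
      Rabs (x - u) < 2 * delta u v -> Rabs (y - v) < 2 * delta u v ->
      Rabs (F (x, y) - F (u, v)) < eps / 2)
    by (intros u v; exact (proj2_sig (constructive_indefinite_description _ (Local u v)))).
  destruct (compactness_value_2d (fst p - r) (fst p + r) (snd p - r) (snd p + r) delta) as [d Hd].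
  exists d. split; [apply cond_pos|].
  intros [x y] [x' y'] [Hx Hy] Hq' H1 H2. simpl in *.
  apply NNPP. intros Hn. apply (Hd x y Hx Hy). intros (u & v & Hu & Hv & A1 & A2 & A3).
  apply Hn. pose proof (cond_pos (delta u v)).
  assert (B1 : Rabs (F (x, y) - F (u, v)) < eps / 2) by (apply Hdelta; [split|..]; auto; lra).
  assert (B2 : Rabs (F (x', y') - F (u, v)) < eps / 2).
  { apply Hdelta; [split; auto|..]; apply Rabs_def2 in A1, A2, H1, H2; apply Rabs_def1; lra. }
  replace (F (x, y) - F (x', y')) with ((F (x, y) - F (u, v)) - (F (x', y') - F (u, v))) by ring.
  eapply Rle_lt_trans; [apply Rabs_triang|]. rewrite Rabs_Ropp. lra.
Qed.

Lemma square_bounded (F : fn) p r : (forall q, square p r q -> continuous F q) ->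
  exists B, forall q, square p r q -> Rabs (F q) <= B.
Proof.
  intros Hc. destruct (square_unif_cont F p r Hc 1 Rlt_0_1) as [d [Hd Hu]].
  (* Walk from [p] to [q] in [N] steps, each shorter than the modulus [d]. *)
  destruct (INR_archimed d (Rabs r) Hd) as [n Hn].
  set (N := S n). assert (HN : 0 < INR N) by apply lt_0_INR, Nat.lt_0_succ.
  assert (HrN : Rabs r < INR N * d) by (unfold N; rewrite S_INR; lra).
  exists (Rabs (F p) + INR N). intros q Hq.
  set (z := fun j : nat =>
    (fst p + INR j / INR N * (fst q - fst p), snd p + INR j / INR N * (snd q - snd p))).
  assert (Hz : forall j, (j <= N)%nat -> square p r (z j)).
  { intros j Hj. apply square_convex; auto. split.
    - apply Rdiv_le_0_compat; [apply pos_INR | exact HN].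
    - apply (Rmult_le_reg_r (INR N)); [exact HN|]. unfold Rdiv. rewrite Rmult_assoc, Rinv_l by lra.
      rewrite Rmult_1_l, Rmult_1_r. apply le_INR, Hj. }
  assert (Hstep : forall j,
      Rabs (fst (z (S j)) - fst (z j)) < d /\ Rabs (snd (z (S j)) - snd (z j)) < d).
  { intros j. destruct Hq as [Hx Hy]. unfold z; cbn [fst snd]. rewrite S_INR.
    replace (fst p + (INR j + 1) / INR N * (fst q - fst p) - (fst p + INR j / INR N * (fst q - fst p)))
      with ((fst q - fst p) / INR N) by (field; lra).
    replace (snd p + (INR j + 1) / INR N * (snd q - snd p) - (snd p + INR j / INR N * (snd q - snd p)))
      with ((snd q - snd p) / INR N) by (field; lra).
    assert (Small : forall a, Rabs a <= r -> Rabs (a / INR N) < d).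
    { intros a Ha. unfold Rdiv.
      rewrite Rabs_mult, (Rabs_pos_eq (/ INR N)) by (apply Rlt_le, Rinv_0_lt_compat; lra).
      apply (Rmult_lt_reg_r (INR N)); [exact HN|]. rewrite Rmult_assoc, Rinv_l, Rmult_1_r by lra.
      pose proof (Rle_abs r). lra. }
    split; apply Small, Rabs_le; lra. }
  assert (Chain : forall j, (j <= N)%nat -> Rabs (F (z j)) <= Rabs (F p) + INR j).
  { induction j as [|j IH]; intros Hj.
    - unfold z. simpl. unfold Rdiv. rewrite !Rmult_0_l, !Rplus_0_r. destruct p; simpl; lra.
    - rewrite S_INR. pose proof (IH (Nat.lt_le_incl _ _ Hj)).
      destruct (Hstep j) as [Sx Sy].
      pose proof (Hu (z (S j)) (z j) (Hz _ Hj) (Hz _ (Nat.lt_le_incl _ _ Hj)) Sx Sy).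
      pose proof (Rabs_triang_inv (F (z (S j))) (F (z j))). lra. }
  replace q with (z N); [apply Chain; auto|].
  unfold z. unfold Rdiv. rewrite Rinv_r by lra. destruct q; simpl; f_equal; ring.
Qed.

Lemma square_max (F : fn) p r : 0 <= r -> (forall q, square p r q -> continuous F q) ->
  exists q0, square p r q0 /\ forall q, square p r q -> F q <= F q0.
Proof.
  intros Hr Hc.
  assert (Hp : square p r p) by (unfold square; lra).
  destruct (square_bounded F p r Hc) as [B HB].
  set (E := fun z => exists q, square p r q /\ z = F q).
  destruct (completeness E) as [S [HS1 HS2]].
  { exists B. intros z [q [Hq ->]]. specialize (HB q Hq). apply Rabs_le_between in HB. lra. }
  { exists (F p), p. auto. }
  (* If the supremum [S] were not attained, [1 / (S - F)] would be continuous and unbounded. *)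
  apply NNPP. intros Hn.
  assert (Hlt : forall q, square p r q -> F q < S).
  { intros q Hq. destruct (HS1 (F q)) as [Hl | Heq]; [exists q; auto | exact Hl|].
    exfalso. apply Hn. exists q. split; [exact Hq|].
    intros q' Hq'. rewrite Heq. apply HS1. exists q'; auto. }
  assert (Hc' : forall q, square p r q -> continuous (fun q => / (S - F q)) q).
  { intros q Hq. apply (continuous_comp (fun q => S - F q) Rinv).
    - apply (continuous_minus (fun _ => S) F); [apply continuous_const | exact (Hc q Hq)].
    - apply continuous_Rinv. specialize (Hlt q Hq). lra. }
  destruct (square_bounded _ p r Hc') as [B' HB'].
  assert (HB'0 : 0 < B').
  { specialize (HB' p Hp). specialize (Hlt p Hp).
    assert (0 < / (S - F p)) by (apply Rinv_0_lt_compat; lra).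
    rewrite Rabs_right in HB'; lra. }
  assert (Hub : is_upper_bound E (S - / B')).
  { intros z [q [Hq ->]]. specialize (HB' q Hq). specialize (Hlt q Hq).
    assert (0 < / (S - F q)) by (apply Rinv_0_lt_compat; lra).
    rewrite Rabs_right in HB' by lra.
    assert (/ B' <= S - F q).
    { replace (S - F q) with (/ / (S - F q)) by (field; lra). apply Rinv_le_contravar; auto. }
    lra. }
  specialize (HS2 _ Hub). assert (0 < / B') by (apply Rinv_0_lt_compat; lra). lra.
Qed.

Lemma mvt_bound (h dh : R -> R) a b G :
  (forall t, Rmin a b <= t <= Rmax a b -> is_derive h t (dh t) /\ Rabs (dh t) <= G) ->
  Rabs (h b - h a) <= G * Rabs (b - a).
Proof.
  intros H.
  destruct (MVT_gen h a b dh) as [t [Ht E]].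
  - intros t Ht. apply H. lra.
  - intros t Ht. apply continuity_pt_filterlim.
    apply (ex_derive_continuous (K := R_AbsRing) (V := R_NormedModule)).
    exists (dh t). apply H. exact Ht.
  - rewrite E, Rabs_mult. apply Rmult_le_compat_r; [apply Rabs_pos | apply H, Ht].
Qed.

Lemma square_lipschitz r (L : fn) p0 r0 G p q : (forall z, square p0 r0 z -> opendisc r z) ->
  smooth_on r L -> (forall z, square p0 r0 z -> Rabs (dx L z) <= G /\ Rabs (dy L z) <= G) ->
  square p0 r0 p -> square p0 r0 q ->
  Rabs (L q - L p) <= G * (Rabs (fst q - fst p) + Rabs (snd q - snd p)).
Proof.
  intros Hin HL HG [[P1 P2] [P3 P4]] [[Q1 Q2] [Q3 Q4]].
  destruct p as [px py], q as [qx qy]. simpl in *.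
  assert (Seg : forall x y, Rmin px qx <= x <= Rmax px qx -> Rmin py qy <= y <= Rmax py qy ->
      square p0 r0 (x, y)).
  { intros x y Hx Hy. unfold Rmin, Rmax in Hx, Hy. unfold square; simpl.
    destruct (Rle_dec px qx), (Rle_dec py qy); lra. }
  assert (Bx : Rabs (L (qx, py) - L (px, py)) <= G * Rabs (qx - px)).
  { apply (mvt_bound (fun t => L (t, py)) (fun t => dx L (t, py))). intros t Ht.
    assert (Hs : square p0 r0 (t, py))
      by (apply Seg; [exact Ht | split; [apply Rmin_l | apply Rmax_l]]).
    exact (conj (smooth_is_derive_x r L t py HL (Hin _ Hs)) (proj1 (HG _ Hs))). }
  assert (By : Rabs (L (qx, qy) - L (qx, py)) <= G * Rabs (qy - py)).
  { apply (mvt_bound (fun t => L (qx, t)) (fun t => dy L (qx, t))). intros t Ht.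
    assert (Hs : square p0 r0 (qx, t))
      by (apply Seg; [split; [apply Rmin_r | apply Rmax_r] | exact Ht]).
    exact (conj (smooth_is_derive_y r L qx t HL (Hin _ Hs)) (proj2 (HG _ Hs))). }
  replace (L (qx, qy) - L (px, py))
    with ((L (qx, qy) - L (qx, py)) + (L (qx, py) - L (px, py))) by ring.
  eapply Rle_trans; [apply Rabs_triang|]. lra.
Qed.

(** * The estimate *)

Section CovectorNorm.

Variables (c : R) (g : metric c).

Lemma covnorm2_nonneg p a b : opendisc c p -> 0 <= covnorm2 g p a b.
Proof.
  intros Hp. destruct (g_posdef c g p Hp) as [P11 PD]. unfold covnorm2.
  apply Rdiv_le_0_compat; [|exact PD].
  apply (Rmult_le_reg_l (g11 g p)); [exact P11|]. rewrite Rmult_0_r.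
  replace (g11 g p * _) with ((g11 g p * b - g12 g p * a) ^ 2 + gdet g p * a ^ 2)
    by (unfold gdet; ring).
  fold (gdet g p) in PD.
  pose proof (pow2_ge_0 (g11 g p * b - g12 g p * a)). pose proof (pow2_ge_0 a). nra.
Qed.

Lemma sum_sqr_le_covnorm2 p a b : opendisc c p ->
  a ^ 2 + b ^ 2 <= (g11 g p + g22 g p) * covnorm2 g p a b.
Proof.
  intros Hp. pose proof (gdet_pos c g p Hp) as PD. unfold covnorm2.
  apply (Rmult_le_reg_r (gdet g p)); [exact PD|].
  replace ((g11 g p + g22 g p) * _ * gdet g p)
    with ((g11 g p + g22 g p) * (g22 g p * a ^ 2 - 2 * g12 g p * a * b + g11 g p * b ^ 2))
    by (field; lra).
  replace ((g11 g p + g22 g p) * _) with ((a ^ 2 + b ^ 2) * gdet g p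
    + (g22 g p * a - g12 g p * b) ^ 2 + (g11 g p * b - g12 g p * a) ^ 2) by (unfold gdet; ring).
  pose proof (pow2_ge_0 (g22 g p * a - g12 g p * b)).
  pose proof (pow2_ge_0 (g11 g p * b - g12 g p * a)).
  lra.
Qed.

Lemma Rabs_le_of_covnorm2 p a b T N : opendisc c p -> g11 g p + g22 g p <= T ->
  covnorm2 g p a b <= N -> Rabs a <= sqrt (T * N) /\ Rabs b <= sqrt (T * N).
Proof.
  intros Hp HT HN.
  pose proof (sum_sqr_le_covnorm2 p a b Hp). pose proof (covnorm2_nonneg p a b Hp).
  destruct (g_posdef c g p Hp) as [P11 PD].
  assert (P22 : 0 < g22 g p) by nra.
  assert (Hab : a ^ 2 + b ^ 2 <= T * N) by nra.
  pose proof (pow2_ge_0 a). pose proof (pow2_ge_0 b).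
  split; rewrite <- sqrt_Rsqr_abs; apply sqrt_le_1_alt; unfold Rsqr; lra.
Qed.

Lemma covnorm2_le_of_dnormC h p M : opendisc c p -> dnormC g h p <= M ->
  covnorm2 g p (dx (fun q => Re (h q)) p) (dy (fun q => Re (h q)) p) <= M ^ 2 /\
  covnorm2 g p (dx (fun q => Im (h q)) p) (dy (fun q => Im (h q)) p) <= M ^ 2.
Proof.
  intros Hp HM. unfold dnormC in HM. cbv zeta in HM.
  pose proof (covnorm2_nonneg p (dx (fun q => Re (h q)) p) (dy (fun q => Re (h q)) p) Hp).
  pose proof (covnorm2_nonneg p (dx (fun q => Im (h q)) p) (dy (fun q => Im (h q)) p) Hp).
  match type of HM with sqrt ?S <= M =>
    assert (HS : S <= M ^ 2) by (rewrite <- (sqrt_sqrt S) by lra; pose proof (sqrt_pos S); nra) end.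
  split; lra.
Qed.

End CovectorNorm.

Definition sqdist (p : R * R) : fn := fun q => (fst q - fst p) ^ 2 + (snd q - snd p) ^ 2.

Lemma smooth_sqdist r p : smooth_on r (sqdist p).
Proof.
  apply (smooth_ext r (fun q => (fst q - fst p) * (fst q - fst p) + (snd q - snd p) * (snd q - snd p)));
    [intros; unfold sqdist; ring|].
  apply smooth_plus; apply smooth_mult; apply smooth_minus;
    auto using smooth_fst, smooth_snd, smooth_const.
Qed.

Section MaximumPrinciple.

Variables (c : R) (g : metric c).

Lemma exists_lap_le_lap_sqdist u p r k delta : 0 < r -> smooth_on c u ->
  (forall q, square p r q -> opendisc c q) -> (forall q, square p r q -> Rabs (u q) <= delta) ->
  2 * delta < k * r ^ 2 ->
  exists q, square p r q /\ lap g u q <= k * lap g (sqdist p) q.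
Proof.
  intros Hr Hu Hin Hb Hkr.
  set (w := fun q => u q + - k * sqdist p q).
  assert (Hw : smooth_on c w) by (apply smooth_lin; [exact Hu | apply smooth_sqdist]).
  destruct (square_max w p r) as [q0 [Hq0 Hmax]];
    [lra | intros q Hq; exact (smooth_continuous c w q Hw (Hin q Hq))|].
  assert (Hp : square p r p) by (unfold square; lra).
  assert (Hk : 0 < k) by (pose proof (Hb p Hp); pose proof (Rabs_pos (u p)); nra).
  assert (Center : - delta <= w q0).
  { apply (Rle_trans _ (w p)); [|exact (Hmax p Hp)].
    unfold w, sqdist. rewrite !Rminus_diag.
    pose proof (Hb p Hp) as H. apply Rabs_le_between in H. lra. }
  (* On the boundary of the square [sqdist p >= r ^ 2], hence [w < - delta]. *)
  assert (Interior : Rabs (fst q0 - fst p) < r /\ Rabs (snd q0 - snd p) < r).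
  { pose proof (Hb q0 Hq0) as H. apply Rabs_le_between in H. unfold w, sqdist in Center.
    destruct Hq0 as [Hx Hy].
    split; apply Rnot_le_lt; intros Hedge;
      assert (r ^ 2 <= (fst q0 - fst p) ^ 2 + (snd q0 - snd p) ^ 2)
        by (rewrite <- (pow2_abs (fst q0 - fst p)), <- (pow2_abs (snd q0 - snd p));
            pose proof (Rabs_pos (fst q0 - fst p)); pose proof (Rabs_pos (snd q0 - snd p)); nra);
      nra. }
  exists q0. split; [exact Hq0|].
  assert (Lw : lap g w q0 <= 0).
  { apply (lap_nonpos_at_local_max c g w q0 Hw (Hin q0 Hq0)).
    apply (filter_imp (square p r)); [exact Hmax|].
    exact (square_locally p r q0 (proj1 Interior) (proj2 Interior)). }
  unfold w in Lw. rewrite lap_lin in Lw; [lra | exact Hu | apply smooth_sqdist | exact (Hin q0 Hq0)].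
Qed.

Lemma lap_bound_of_oscillation u p r k delta G B : 0 < r -> smooth_on c u ->
  (forall q, square p r q -> opendisc c q) -> (forall q, square p r q -> Rabs (u q) <= delta) ->
  2 * delta < k * r ^ 2 ->
  (forall q, square p r q -> Rabs (lap g u q - lap g u p) <= G) ->
  (forall q, square p r q -> Rabs (lap g (sqdist p) q) <= B) ->
  Rabs (lap g u p) <= G + k * B.
Proof.
  intros Hr Hu Hin Hb Hkr Hosc HB.
  assert (Hp : square p r p) by (unfold square; lra).
  assert (Hk : 0 < k) by (pose proof (Hb p Hp); pose proof (Rabs_pos (u p)); nra).
  destruct (exists_lap_le_lap_sqdist u p r k delta Hr Hu Hin Hb Hkr) as [q [Hq Hle]].
  destruct (exists_lap_le_lap_sqdist (fun q => - u q) p r k delta Hr (smooth_opp c u Hu) Hin)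
    as [q' [Hq' Hle']]; [intros z Hz; rewrite Rabs_Ropp; auto | exact Hkr |].
  rewrite lap_opp in Hle' by auto.
  pose proof (Hosc q Hq). pose proof (Hosc q' Hq'). pose proof (HB q Hq). pose proof (HB q' Hq').
  repeat match goal with H : Rabs _ <= _ |- _ => apply Rabs_le_between in H end.
  apply Rabs_le. split; nra.
Qed.

Lemma lap_sqdist p q : opendisc c q ->
  lap g (sqdist p) q = lap g (sqdist (0, 0)) q - 2 * fst p * lap g fst q - 2 * snd p * lap g snd q.
Proof.
  intros Hq.
  replace (sqdist p) with (fun z => ((sqdist (0, 0) z + (-2 * fst p) * fst z) + (-2 * snd p) * snd z)
                                    + 1 * (fun _ => fst p ^ 2 + snd p ^ 2) z)
    by (apply functional_extensionality; intros z; unfold sqdist; simpl; ring).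
  assert (S0 := smooth_sqdist c (0, 0)).
  assert (S1 := smooth_lin c _ _ (-2 * fst p) S0 (smooth_fst c)).
  rewrite lap_lin, lap_const, (lap_lin _ _ _ snd), (lap_lin _ _ _ fst);
    auto using smooth_fst, smooth_snd, smooth_const, smooth_lin.
  ring.
Qed.

Lemma lap_sqdist_bounded rho : (forall q, square (0, 0) rho q -> opendisc c q) ->
  exists B, forall p q, square (0, 0) rho p -> square (0, 0) rho q -> Rabs (lap g (sqdist p) q) <= B.
Proof.
  intros Hin.
  assert (Bnd : forall F, smooth_on c F ->
      exists B, forall q, square (0, 0) rho q -> Rabs (lap g F q) <= B)
    by (intros F HF; apply square_bounded; intros q Hq;
        apply (smooth_continuous c); [apply smooth_lap; exact HF | exact (Hin q Hq)]).
  destruct (Bnd _ (smooth_sqdist c (0, 0))) as [B0 H0].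
  destruct (Bnd _ (smooth_fst c)) as [B1 H1]. destruct (Bnd _ (smooth_snd c)) as [B2 H2].
  exists (B0 + 2 * Rabs rho * (B1 + B2)). intros [px py] q Hp Hq.
  rewrite lap_sqdist by auto. simpl fst; simpl snd.
  specialize (H0 q Hq). specialize (H1 q Hq). specialize (H2 q Hq).
  destruct Hp as [Hx Hy]. simpl in Hx, Hy.
  assert (Rabs px <= Rabs rho) by (pose proof (Rle_abs rho); apply Rabs_le; lra).
  assert (Rabs py <= Rabs rho) by (pose proof (Rle_abs rho); apply Rabs_le; lra).
  assert (Rabs (px * lap g fst q) <= Rabs rho * B1)
    by (rewrite Rabs_mult; apply Rmult_le_compat; auto using Rabs_pos).
  assert (Rabs (py * lap g snd q) <= Rabs rho * B2)
    by (rewrite Rabs_mult; apply Rmult_le_compat; auto using Rabs_pos).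
  repeat match goal with H : Rabs _ <= _ |- _ => apply Rabs_le_between in H end.
  apply Rabs_le. split; lra.
Qed.

Lemma lap_bounded_on_quarter_disc delta M : 0 < c -> exists lambda, forall u, smooth_on c u ->
  (forall p, opendisc c p -> Rabs (u p) <= delta) ->
  (forall p, opendisc c p -> covnorm2 g p (dx (lap g u) p) (dy (lap g u) p) <= M ^ 2) ->
  forall p, opendisc (c / 4) p -> Rabs (lap g u p) <= lambda.
Proof.
  intros Hc.
  assert (HK : forall q, square (0, 0) (c / 2) q -> opendisc c q)
    by (intros; apply (square_half_in_disc c); auto).
  destruct (square_bounded (fun q => g11 g q + g22 g q) (0, 0) (c / 2)) as [T HT].
  { intros q Hq. apply (smooth_continuous c); [|auto].
    apply smooth_plus; [apply g11_smooth | apply g22_smooth]. }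
  destruct (lap_sqdist_bounded (c / 2) HK) as [B HB].
  set (r := c / 4). set (k := (2 * delta + 1) / r ^ 2). set (G := sqrt (T * M ^ 2)).
  exists (G * (2 * r) + k * B).
  intros u Hu Hdelta HM p Hp.
  assert (Hr : 0 < r) by (unfold r; lra).
  assert (Sq : forall q, square p r q -> square (0, 0) (c / 2) q)
    by (intros; apply (square_quarter_in_half c p); auto).
  assert (Hpp : square p r p) by (unfold square; lra).
  apply (lap_bound_of_oscillation u p r k delta); auto.
  - unfold k. replace ((2 * delta + 1) / r ^ 2 * r ^ 2) with (2 * delta + 1) by (field; lra). lra.
  - intros q Hq.
    eapply Rle_trans; [apply (square_lipschitz c (lap g u) (0, 0) (c / 2) G); auto using smooth_lap|].
    + intros z Hz. apply (Rabs_le_of_covnorm2 c g z); auto.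
      specialize (HT z Hz). apply Rabs_le_between in HT. lra.
    + destruct Hq as [Hx Hy]. assert (0 <= G) by apply sqrt_pos.
      assert (Rabs (fst q - fst p) <= r) by (apply Rabs_le; lra).
      assert (Rabs (snd q - snd p) <= r) by (apply Rabs_le; lra).
      nra.
Qed.

End MaximumPrinciple.

Theorem lemma4 (c delta M : R) (hc : 0 < c) (hdelta : 0 < delta) (hM : 0 < M)
  (g : metric c) :
  exists lambda : R,
    forall f : (R * R)%type -> C,
      smoothC_on c f ->
      (forall p, opendisc c p -> Cmod (f p) <= delta) ->
      (forall p, opendisc c p -> dnormC g (lapC g f) p <= M) ->
      forall p, opendisc (c / 4) p -> Cmod (lapC g f p) <= lambda.
Proof.
  destruct (lap_bounded_on_quarter_disc c g delta M hc) as [lambda Hlambda].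
  exists (sqrt 2 * lambda).
  intros f [HRe HIm] Hf HM p Hp.
  assert (Parts : forall q, opendisc c q -> Rabs (Re (f q)) <= delta /\ Rabs (Im (f q)) <= delta).
  { intros q Hq. pose proof (Rmax_Cmod (f q)). pose proof (Hf q Hq).
    pose proof (Rmax_l (Rabs (fst (f q))) (Rabs (snd (f q)))).
    pose proof (Rmax_r (Rabs (fst (f q))) (Rabs (snd (f q)))). unfold Re, Im. split; lra. }
  pose proof (fun q Hq => covnorm2_le_of_dnormC c g (lapC g f) q M Hq (HM q Hq)) as Hgrad.
  eapply Rle_trans; [apply Cmod_2Rmax|]. apply Rmult_le_compat_l; [apply sqrt_pos|].
  apply Rmax_lub; [apply (Hlambda (fun q => Re (f q))) | apply (Hlambda (fun q => Im (f q)))]; auto;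
    intros q Hq; [exact (proj1 (Parts q Hq)) | exact (proj1 (Hgrad q Hq))
                 | exact (proj2 (Parts q Hq)) | exact (proj2 (Hgrad q Hq))].
Qed.
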